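(* Let $r$ be a positive integer, and let $\ell$ and $k$ be nonnegative integers such that $k\geq b(r)+2$. Suppose $d\in B_r$ satisfies $d<p_{k+1}-r$ and $d(p_{k+\ell}-r)<(d+1)(p_k-r)$. If $\displaystyle n=d\,p_{k+\ell}\prod_{i=b(r)+1}^{k-1}p_i$, then $n\in F_r$.
   Context: $p_i$ denotes the $i$-th prime. For a positive integer $r$, the Schemmel totient function $S_r$ is the multiplicative arithmetic function with $S_r(p^{\alpha})=0$ if $p\leq r$ and $S_r(p^{\alpha})=p^{\alpha-1}(p-r)$ if $p>r$, for all primes $p$ and positive integers $\alpha$ (and $S_r(1)=1$). $B_r=\{n\in\mathbb{N}: S_r(n)>0\}$, i.e. the set of positive integers whose smallest prime factor exceeds $r$, together with $1$. $F_r$ (the sparsely Schemmel totient numbers of order $r$) is the set of $n\in B_r$ such that $S_r(n)<S_r(m)$ for all $m\in B_r$ with $m>n$. $b(1)=0$, and for $r\geq 2$, $b(r)$ is the largest integer with $p_{b(r)}\leq r$. *)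

From mathcomp Require Import all_boot.
Set Implicit Arguments. Unset Strict Implicit. Unset Printing Implicit Defensive.

Lemma ex_prime_above (m : nat) : exists p, (m < p) && prime p.
Proof. case: (prime_above m) => p Hm Hp; exists p; by rewrite Hm Hp. Qed.

Definition nextprime (m : nat) : nat := ex_minn (ex_prime_above m).

Lemma nextprime_gt m : m < nextprime m.
Proof. rewrite /nextprime; case: ex_minnP => p /andP[] //. Qed.

(* pth i = p_i, the i-th prime, 1-indexed: pth 1 = 2, pth 2 = 3, ...
   (pth 0 = 0 is a dummy value, never used as a prime). *)
Fixpoint pth (i : nat) : nat :=
  match i with
  | 0 => 0
  | i'.+1 => nextprime (pth i')
  end.

Lemma pth_ge i : i <= pth i.
Proof. elim: i => //= i IH; exact: leq_ltn_trans IH (nextprime_gt _). Qed.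

(* b(r): the largest integer j with p_j <= r; j = 0 is admissible
   (p_0 is the dummy 0), so b 1 = 0 as in the paper. *)
Lemma b_ex (r : nat) : exists j, pth j <= r.
Proof. by exists 0. Qed.

Lemma b_bound (r : nat) : forall j, pth j <= r -> j <= r.
Proof. move=> j Hj; exact: leq_trans (pth_ge j) Hj. Qed.

Definition b (r : nat) : nat := ex_maxn (b_ex r) (@b_bound r).

Definition Schemmel (r n : nat) : nat :=
  \prod_(p <- primes n) (if p <= r then 0 else p ^ (logn p n).-1 * (p - r)).

Definition inB (r n : nat) : bool := (0 < n) && (0 < Schemmel r n).

Definition inF (r n : nat) : Prop :=
  inB r n /\ forall m, inB r m -> n < m -> Schemmel r n < Schemmel r m.

(* Since S_r(m) = (m / rad m) * prod_{q | m} (q - r) on B_r, and the primes of n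
   are p_{k+l} and the primes in (r, p_k) with n / rad n = d, comparing n with
   m > n in B_r reduces, after cancelling the primes below p_k dividing both, to
   lists D of primes in (r, p_k) (dividing n only) and E of primes >= p_k
   (dividing m only): from d p prod D < M prod E, with M = m / rad m, deduce
   d (p - r) prod (D - r) < M prod (E - r).  As each x in D is below each e in E,
   trading x for e increases (e - r)/(x - r) more than e/x; this settles
   |E| <= |D|.  If |E| = |D| + 1 the extra factor e >= p_k is absorbed using
   either M > d and d (p - r) < (d + 1) (p_k - r), or M <= d.  If |E| >= |D| + 2,
   two factors e1 >= p_k and e2 >= p_{k+1} already exceed d (p - r), because
   d < p_{k+1} - r. *)

From mathcomp Require Import all_boot zify ring.
Set Implicit Arguments. Unset Strict Implicit. Unset Printing Implicit Defensive.

Lemma nextprime_prime m : prime (nextprime m).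
Proof. by rewrite /nextprime; case: ex_minnP => p /andP[]. Qed.

Lemma nextprime_min m q : m < q -> prime q -> nextprime m <= q.
Proof. by move=> lt_mq q_pr; rewrite /nextprime; case: ex_minnP => p _; apply; rewrite lt_mq. Qed.

Lemma leq_pth : {mono pth : i j / i <= j}.
Proof. exact/leq_mono/(homo_ltn ltn_trans (fun i => nextprime_gt (pth i))). Qed.

Lemma ltn_pth : {mono pth : i j / i < j}.
Proof. exact/leqW_mono/leq_pth. Qed.

Lemma pth_prime i : 0 < i -> prime (pth i).
Proof. by case: i => // i _; apply: nextprime_prime. Qed.

Lemma pth_succ_min i q : prime q -> pth i < q -> pth i.+1 <= q.
Proof. by move=> q_pr lt_q; apply: nextprime_min. Qed.

Lemma prime_pth q : prime q -> exists2 i, 0 < i & pth i = q.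
Proof.
move=> q_pr; have ex_i : exists i, q <= pth i by exists q; apply: pth_ge.
case: (ex_minnP ex_i) => [[|i]] q_le min_i.
  by move: q_le; rewrite leqn0 => /eqP q0; rewrite q0 in q_pr.
exists i.+1 => //; apply/eqP; rewrite eqn_leq q_le nextprime_min //.
by rewrite ltnNge; apply/negP => /min_i; rewrite ltnn.
Qed.

Lemma b_spec r : pth (b r) <= r < pth (b r).+1.
Proof.
rewrite /b; case: ex_maxnP => j -> max_j /=.
by rewrite ltnNge; apply/negP => le_r; have := max_j j.+1 le_r; rewrite ltnn.
Qed.

Definition primes_between r k := [seq pth i | i <- index_iota (b r + 1) k].

Lemma mem_primes_between r k q :
  (q \in primes_between r k) = [&& prime q, r < q & q < pth k].
Proof.
have /andP[pb_le_r r_lt_pb1] := b_spec r.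
apply/mapP/and3P => [[i] | [q_pr r_lt_q q_lt_pk]].
  rewrite mem_index_iota => /andP[b_lt_i i_lt_k] ->.
  rewrite pth_prime ?ltn_pth //; last by lia.
  by rewrite (leq_trans r_lt_pb1) // leq_pth; lia.
have [i i_gt0 pi_q] := prime_pth q_pr.
exists i => //; rewrite mem_index_iota -ltn_pth pi_q q_lt_pk andbT addn1.
by rewrite -ltn_pth pi_q (leq_ltn_trans pb_le_r).
Qed.

Lemma uniq_primes_between r k : uniq (primes_between r k).
Proof. by rewrite map_inj_uniq ?iota_uniq //; apply: incn_inj leq_pth. Qed.

Lemma prod_primes_between r k :
  \prod_(b r + 1 <= i < k) pth i = \prod_(q <- primes_between r k) q.
Proof. by rewrite big_map. Qed.

Definition rad n := \prod_(q <- primes n) q.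

Definition rad_cofactor n := \prod_(q <- primes n) q ^ (logn q n).-1.

Lemma rad_cofactorE n : 0 < n -> n = rad_cofactor n * rad n.
Proof.
move=> n_gt0; rewrite {1}(prod_prime_decomp n_gt0) prime_decompE big_map -big_split /=.
by apply: eq_big_seq => q q_n; rewrite -expnSr prednK // logn_gt0.
Qed.

Lemma SchemmelE r n : {in primes n, forall q, r < q} ->
  Schemmel r n = rad_cofactor n * \prod_(q <- primes n) (q - r).
Proof.
move=> r_lt; rewrite /Schemmel -big_split /=.
by apply: eq_big_seq => q /r_lt r_lt_q; rewrite leqNgt r_lt_q.
Qed.

Lemma inBP r n : inB r n <-> 0 < n /\ {in primes n, forall q, r < q}.
Proof.
split=> [/andP[n_gt0 S_gt0] | [n_gt0 r_lt]].
  split=> // q q_n; rewrite ltnNge; apply/negP => q_le_r.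
  by move: S_gt0; rewrite /Schemmel (big_rem _ q_n) /= q_le_r.
rewrite /inB n_gt0 /= (SchemmelE r_lt) muln_gt0 /rad_cofactor; apply/andP; split.
  by rewrite big_seq prodn_cond_gt0 // => q /r_lt r_lt_q; rewrite expn_gt0 (leq_ltn_trans _ r_lt_q).
by rewrite big_seq prodn_cond_gt0 // => q /r_lt; rewrite subn_gt0.
Qed.

(* The gap between the two sides is r (e - x) (U - x V). *)
Lemma leq_subr_exchange_step r x e U V : r < x <= e -> x * V <= U ->
  (x - r) * (e * U - r * (x * V)) <= x * (e - r) * (U - r * V).
Proof.
move=> /andP[r_lt_x x_le_e] /subnK UE; set w := U - x * V in UE.
rewrite -{}UE.
have -> : e * (w + x * V) - r * (x * V) = e * w + (e - r) * (x * V).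
  by rewrite mulnDr -addnBA ?mulnBl // leq_mul2r (leq_trans (ltnW r_lt_x)) ?orbT.
have -> : w + x * V - r * V = w + (x - r) * V by rewrite -addnBA ?mulnBl // leq_mul2r ltnW ?orbT.
have [a ->] : exists a, e = x + a by exists (e - x); lia.
have [b ->] : exists b, x = r + b by exists (x - r); lia.
rewrite !addKn -addnA addKn; nia.
Qed.

Lemma leq_prod_subr r (D E : seq nat) : size D <= size E ->
  {in E, forall e, r < e} -> {in D & E, forall x e, x <= e} ->
  \prod_(x <- D) (x - r) <= \prod_(e <- E) (e - r).
Proof.
elim: E D => [|e E IH] [|x D] //= size_le r_lt le_xe.
  by rewrite big_nil big_seq prodn_cond_gt0 // => e' /r_lt; rewrite subn_gt0.
rewrite !big_cons; apply: leq_mul; first by rewrite leq_sub2r // le_xe ?mem_head.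
by apply: IH => // [e' e'_E | x' e' x'_D e'_E]; [apply: r_lt | apply: le_xe];
  apply: mem_behead.
Qed.

Lemma leq_prod_subr_exchange r (D E : seq nat) : size E <= size D ->
  {in D, forall x, r <= x} -> {in D & E, forall x e, x <= e} ->
  \prod_(e <- E) e * \prod_(x <- D) (x - r) <= \prod_(e <- E) (e - r) * \prod_(x <- D) x.
Proof.
elim: E D => [|e E IH] [|x D] //= size_le r_le le_xe.
- by rewrite !big_nil.
- by rewrite !big_nil !mul1n; apply: leq_prod => x' _; apply: leq_subr.
rewrite !big_cons mulnACA [leqRHS]mulnACA; apply: leq_mul.
  have x_le_e : x <= e by rewrite le_xe ?mem_head.
  by rewrite mulnBr mulnBl leq_sub2l // mulnC leq_mul2r x_le_e orbT.
by apply: IH => // [x' x'_D | x' e' x'_D e'_E]; [apply: r_le | apply: le_xe];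
  apply: mem_behead.
Qed.

(* Read multiplicatively: a (prod e)/(prod x) - r <= (a - r) (prod (e - r))/(prod (x - r)). *)
Lemma leq_prod_subr_exchange_shift r (D E : seq nat) a : size D = size E ->
  {in D, forall x, r < x <= a} -> {in D & E, forall x e, x <= e} ->
  \prod_(x <- D) (x - r) * (a * \prod_(e <- E) e - r * \prod_(x <- D) x)
    <= (a - r) * \prod_(e <- E) (e - r) * \prod_(x <- D) x.
Proof.
elim: D E => [|x D IH] [|e E] //= => [_ _ _ | [size_eq] x_range le_xe].
  by rewrite !big_nil !muln1 mul1n.
have le_xe' : {in D & E, forall x' e', x' <= e'}.
  by move=> x' e' x'_D e'_E; apply: le_xe; apply: mem_behead.
have /andP[r_lt_x x_le_a] := x_range x (mem_head _ _).
have x_le_e : x <= e by rewrite le_xe ?mem_head.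
have xPD_le_aPE : x * \prod_(x' <- D) x' <= a * \prod_(e' <- E) e'.
  apply: leq_mul => //; have := @leq_prod_subr 0 D E.
  rewrite !(eq_bigr _ (fun i _ => subn0 i)) size_eq; apply=> // e' e'_E.
  have x_le_e' : x <= e' by apply: le_xe; [apply: mem_head | apply: mem_behead].
  by apply: leq_trans x_le_e'; apply: leq_ltn_trans r_lt_x.
rewrite !big_cons.
set PD := \prod_(x' <- D) x'; set PE := \prod_(e' <- E) e'.
set FD := \prod_(x' <- D) (x' - r); set FE := \prod_(e' <- E) (e' - r).
have IHDE : FD * (a * PE - r * PD) <= (a - r) * FE * PD.
  by apply: IH => // x' x'_D; apply: x_range; apply: mem_behead.
have step : (x - r) * (e * (a * PE) - r * (x * PD)) <= x * (e - r) * (a * PE - r * PD).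
  by apply: leq_subr_exchange_step; rewrite ?r_lt_x.
rewrite [a * (e * PE)]mulnCA -mulnA mulnCA.
apply: leq_trans (_ : FD * (x * (e - r) * (a * PE - r * PD)) <= _); first by rewrite leq_mul2l step orbT.
have -> : (a - r) * ((e - r) * FE) * (x * PD) = x * (e - r) * ((a - r) * FE * PD) by ring.
by rewrite mulnCA leq_mul2l IHDE orbT.
Qed.

Section SubrProductComparison.
Variables (r k d p M : nat) (D E : seq nat).
Hypotheses (r_lt_pk : r < pth k) (pk_le_p : pth k <= p)
  (d_lt : d < pth k.+1 - r) (dp_lt : d * (p - r) < (d + 1) * (pth k - r))
  (D_range : {in D, forall x, r < x < pth k})
  (E_large : {in E, forall e, pth k <= e}).

Lemma D_le_E : {in D & E, forall x e, x <= e}.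
Proof. by move=> x e /D_range/andP[_ /ltnW x_le] /E_large; apply: leq_trans. Qed.

Lemma prod_D_gt0 : 0 < \prod_(x <- D) x.
Proof. by rewrite big_seq prodn_cond_gt0 // => x /D_range/andP[/(leq_ltn_trans (leq0n r))]. Qed.

Lemma prod_subr_D_gt0 : 0 < \prod_(x <- D) (x - r).
Proof. by rewrite big_seq prodn_cond_gt0 // => x /D_range/andP[]; rewrite subn_gt0. Qed.

Lemma lt_subr_prod_fewer : size E <= size D ->
  d * p * \prod_(x <- D) x < M * \prod_(e <- E) e ->
  d * (p - r) * \prod_(x <- D) (x - r) < M * \prod_(e <- E) (e - r).
Proof.
move=> size_le lt_nm.
have r_le_D : {in D, forall x, r <= x} by move=> x /D_range/andP[/ltnW].
have exch := leq_prod_subr_exchange size_le r_le_D D_le_E.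
set PD := \prod_(x <- D) x in lt_nm exch *; set PE := \prod_(e <- E) e in lt_nm exch *.
set FD := \prod_(x <- D) (x - r) in exch *; set FE := \prod_(e <- E) (e - r) in exch *.
rewrite -(ltn_pmul2r prod_D_gt0); apply: (@leq_ltn_trans (d * p * PD * FD)).
  have -> : d * (p - r) * FD * PD = d * (p - r) * PD * FD by ring.
  by rewrite !leq_mul2r leq_mul2l leq_subr !orbT.
apply: leq_trans (_ : M * PE * FD <= _); first by rewrite ltn_pmul2r ?prod_subr_D_gt0.
by rewrite -!mulnA leq_mul2l exch orbT.
Qed.

Lemma lt_subr_prod_one_more e E' : E = e :: E' -> size E' = size D ->
  d * p * \prod_(x <- D) x < M * \prod_(e <- E) e ->
  d * (p - r) * \prod_(x <- D) (x - r) < M * \prod_(e <- E) (e - r).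
Proof.
move=> E_eq size_eq lt_nm.
have pk_le_e : pth k <= e by apply: E_large; rewrite E_eq mem_head.
have D_le_E' : {in D & E', forall x e', x <= e'}.
  by move=> x e' x_D e'_E'; apply: D_le_E; rewrite // E_eq mem_behead.
move: lt_nm; rewrite E_eq !big_cons.
set PD := \prod_(x <- D) x; set PE := \prod_(e' <- E') e'.
set FD := \prod_(x <- D) (x - r); set FE := \prod_(e' <- E') (e' - r).
move=> lt_nm; have [d_lt_M | M_le_d] := ltnP d M.
  apply: leq_trans (_ : (d + 1) * (pth k - r) * FD <= _).
    by rewrite ltn_pmul2r ?prod_subr_D_gt0.
  rewrite mulnA; apply: leq_mul; first by apply: leq_mul; rewrite ?addn1 ?leq_sub2r.
  apply: leq_prod_subr => [|e' e'_E'|//]; first by rewrite size_eq.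
  by apply: leq_trans r_lt_pk _; apply: E_large; rewrite E_eq mem_behead.
have shift : FD * (e * PE - r * PD) <= (e - r) * FE * PD.
  apply: leq_prod_subr_exchange_shift => // x /D_range/andP[-> /ltnW x_lt_pk].
  exact: leq_trans x_lt_pk pk_le_e.
have key : d * (p - r) * PD < M * (e * PE - r * PD).
  have MrPD_le : M * r * PD <= d * r * PD by rewrite !leq_mul2r M_le_d !orbT.
  have drPD_le : d * r * PD <= d * p * PD.
    by rewrite leq_mul2r leq_mul2l (leq_trans (ltnW r_lt_pk)) ?orbT.
  move: lt_nm; rewrite !mulnBr !mulnBl !mulnA; lia.
rewrite -(ltn_pmul2r prod_D_gt0).
apply: leq_trans (_ : M * (e * PE - r * PD) * FD <= _).
  have -> : d * (p - r) * FD * PD = d * (p - r) * PD * FD by ring.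
  by rewrite ltn_pmul2r ?prod_subr_D_gt0.
have -> : M * ((e - r) * FE) * PD = M * ((e - r) * FE * PD) by ring.
by rewrite -mulnA leq_mul2l [X in X <= _]mulnC shift orbT.
Qed.

Lemma lt_subr_prod_two_more e1 e2 E' : E = e1 :: e2 :: E' -> e1 < e2 -> prime e2 ->
  size D <= size E' -> 0 < M ->
  d * (p - r) * \prod_(x <- D) (x - r) < M * \prod_(e <- E) (e - r).
Proof.
move=> E_eq e1_lt_e2 e2_pr size_le M_gt0.
have pk_le_e1 : pth k <= e1 by apply: E_large; rewrite E_eq mem_head.
have pk1_le_e2 : pth k.+1 <= e2 by apply: pth_succ_min; rewrite ?(leq_ltn_trans pk_le_e1).
rewrite E_eq !big_cons.
apply: leq_trans (_ : (pth k.+1 - r) * (pth k - r) * \prod_(x <- D) (x - r) <= _).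
  rewrite ltn_pmul2r ?prod_subr_D_gt0 //; apply: leq_trans dp_lt _.
  by rewrite leq_mul2r addn1 d_lt orbT.
have -> : M * ((e1 - r) * ((e2 - r) * \prod_(e <- E') (e - r)))
  = M * ((e2 - r) * (e1 - r) * \prod_(e <- E') (e - r)) by ring.
apply: leq_trans (leq_pmull _ M_gt0).
apply: leq_mul; first by apply: leq_mul; apply: leq_sub2r.
apply: leq_prod_subr => // [e e_E' | x e x_D e_E'].
  by apply: leq_trans r_lt_pk _; apply: E_large; rewrite E_eq !inE e_E' !orbT.
by apply: D_le_E; rewrite // E_eq !inE e_E' !orbT.
Qed.

Lemma lt_subr_prod : sorted ltn E -> {in E, forall e, prime e} ->
  d * p * \prod_(x <- D) x < M * \prod_(e <- E) e ->
  d * (p - r) * \prod_(x <- D) (x - r) < M * \prod_(e <- E) (e - r).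
Proof.
move=> E_sorted E_prime lt_nm.
have M_gt0 : 0 < M by move: (leq_ltn_trans (leq0n _) lt_nm); rewrite muln_gt0 => /andP[].
have [size_le | size_gt] := leqP (size E) (size D); first exact: lt_subr_prod_fewer.
case E_eq: E size_gt => [//|e1 E1] /= size_gt.
have [E1_eq | E1_long] : size E1 = size D \/ size D < size E1 by lia.
  by rewrite -E_eq; apply: (lt_subr_prod_one_more E_eq E1_eq).
case: E1 E_eq E1_long {size_gt} => [//|e2 E'] E_eq E'_long.
rewrite -E_eq; apply: (lt_subr_prod_two_more E_eq) => //.
  by move: E_sorted; rewrite E_eq /= => /andP[].
by apply: E_prime; rewrite E_eq !inE eqxx orbT.
Qed.

End SubrProductComparison.

Section Witness.
Variables r k l d : nat.
Hypotheses (k_large : b r + 2 <= k) (d_inB : inB r d)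
  (d_lt : d < pth k.+1 - r)
  (dp_lt : d * (pth (k + l) - r) < (d + 1) * (pth k - r)).

Local Notation p := (pth (k + l)).
Local Notation P := (primes_between r k).
Local Notation n := (d * p * \prod_(q <- P) q).

Lemma r_lt_pk : r < pth k.
Proof. by have /andP[_ /leq_trans->] := b_spec r; rewrite // leq_pth; lia. Qed.

Lemma pk_le_p : pth k <= p.
Proof. by rewrite leq_pth leq_addr. Qed.

Lemma p_prime : prime p.
Proof. by apply: pth_prime; lia. Qed.

Lemma p_notin_P : p \notin P.
Proof. by rewrite mem_primes_between; apply/negP => /and3P[_ _]; rewrite ltnNge pk_le_p. Qed.

Lemma prod_P_gt0 : 0 < \prod_(q <- P) q.
Proof. by rewrite big_seq prodn_cond_gt0 // => q; rewrite mem_primes_between => /and3P[/prime_gt0]. Qed.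

Lemma primes_d_sub : {subset primes d <= p :: P}.
Proof.
have [_ r_lt] := (inBP r d).1 d_inB.
move=> q q_d; have q_r := r_lt q q_d; move: q_d; rewrite mem_primes => /and3P[q_pr d_gt0 q_dvd].
have q_le_d := dvdn_leq d_gt0 q_dvd.
rewrite inE mem_primes_between q_pr q_r /=.
have [_ | pk_le_q] := ltnP q (pth k); first by rewrite orbT.
apply/orP; left; apply/eqP.
have q_pk : q = pth k.
  apply/eqP; rewrite eqn_leq pk_le_q andbT leqNgt; apply/negP => /(pth_succ_min q_pr); lia.
(* then d >= p_k, and dp_lt leaves no room for p > p_k *)
have := pk_le_p; rewrite q_pk in q_le_d *; nia.
Qed.

Lemma n_gt0 : 0 < n.
Proof.
have [d_gt0 _] := (inBP r d).1 d_inB.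
by rewrite !muln_gt0 d_gt0 prime_gt0 ?p_prime ?prod_P_gt0.
Qed.

Lemma perm_primes_n : perm_eq (primes n) (p :: P).
Proof.
have [d_gt0 _] := (inBP r d).1 d_inB.
apply: uniq_perm; rewrite ?primes_uniq /= ?p_notin_P ?uniq_primes_between //.
move=> q; rewrite mem_primes n_gt0 /=; apply/idP/idP.
  case/andP => q_pr; rewrite !Euclid_dvdM // => /orP[/orP[q_d | q_p] | q_P].
  - by apply: primes_d_sub; rewrite mem_primes q_pr d_gt0 q_d.
  - by rewrite dvdn_prime2 ?p_prime // in q_p; rewrite inE q_p.
  rewrite Euclid_dvd_prod // big_has in q_P; case/hasP: q_P => x x_P q_x.
  have /and3P[x_pr _ _] : [&& prime x, r < x & x < pth k] by rewrite -mem_primes_between.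
  by rewrite dvdn_prime2 // in q_x; rewrite inE (eqP q_x) x_P orbT.
rewrite inE => /orP[/eqP-> | q_P]; first by rewrite p_prime dvdn_mulr // dvdn_mull.
have /and3P[q_pr _ _] : [&& prime q, r < q & q < pth k] by rewrite -mem_primes_between.
by rewrite q_pr dvdn_mull // (big_rem _ q_P) dvdn_mulr.
Qed.

Lemma primes_n_gt : {in primes n, forall q, r < q}.
Proof.
move=> q; rewrite (perm_mem perm_primes_n) inE => /orP[/eqP-> | ].
  exact: leq_trans r_lt_pk pk_le_p.
by rewrite mem_primes_between => /and3P[].
Qed.

Lemma inB_n : inB r n.
Proof. by apply/inBP; split; [apply: n_gt0 | apply: primes_n_gt]. Qed.

Lemma rad_cofactor_n : rad_cofactor n = d.
Proof.
have rad_n : rad n = p * \prod_(q <- P) q by rewrite /rad (perm_big _ perm_primes_n) big_cons.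
have rad_n_gt0 : 0 < rad n by rewrite rad_n muln_gt0 prime_gt0 ?p_prime ?prod_P_gt0.
by apply/eqP; rewrite -(eqn_pmul2r rad_n_gt0) -rad_cofactorE ?n_gt0 // rad_n mulnA.
Qed.

Lemma Schemmel_n : Schemmel r n = d * (p - r) * \prod_(q <- P) (q - r).
Proof.
by rewrite (SchemmelE primes_n_gt) (perm_big _ perm_primes_n) big_cons mulnA rad_cofactor_n.
Qed.

Lemma Schemmel_n_lt m : inB r m -> n < m -> Schemmel r n < Schemmel r m.
Proof.
case/inBP=> m_gt0 m_r n_lt_m.
set s := primes m in m_r.
pose C := [seq q <- P | q \in s]; pose D := [seq q <- P | q \notin s].
pose E := [seq q <- s | q \notin P].
have perm_P : perm_eq P (C ++ D) by rewrite perm_sym perm_filterC.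
have perm_s : perm_eq s (C ++ E).
  rewrite -(perm_filterC (mem P) s) perm_cat2r uniq_perm ?filter_uniq ?primes_uniq ?uniq_primes_between //.
  by move=> q; rewrite !mem_filter andbC.
have C_in_P : {subset C <= P} by move=> q; rewrite mem_filter => /andP[].
have prod_C_gt0 : 0 < \prod_(q <- C) q.
  rewrite big_seq prodn_cond_gt0 // => q /C_in_P.
  by rewrite mem_primes_between => /and3P[/prime_gt0].
have prod_subr_C_gt0 : 0 < \prod_(q <- C) (q - r).
  rewrite big_seq prodn_cond_gt0 // => q /C_in_P.
  by rewrite mem_primes_between subn_gt0 => /and3P[].
have n_split : n = d * p * \prod_(q <- D) q * \prod_(q <- C) q.
  by rewrite (perm_big _ perm_P) big_cat /=; ring.
have m_split : m = rad_cofactor m * \prod_(q <- E) q * \prod_(q <- C) q.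
  by rewrite {1}(rad_cofactorE m_gt0) /rad -/s (perm_big _ perm_s) big_cat /=; ring.
rewrite n_split m_split ltn_pmul2r // in n_lt_m.
have -> : Schemmel r n = d * (p - r) * \prod_(q <- D) (q - r) * \prod_(q <- C) (q - r).
  by rewrite Schemmel_n (perm_big _ perm_P) big_cat /=; ring.
have -> : Schemmel r m = rad_cofactor m * \prod_(q <- E) (q - r) * \prod_(q <- C) (q - r).
  by rewrite (SchemmelE m_r) -/s (perm_big _ perm_s) big_cat /=; ring.
rewrite ltn_pmul2r //; apply: lt_subr_prod n_lt_m.
- exact: r_lt_pk.
- exact: pk_le_p.
- exact: d_lt.
- exact: dp_lt.
- by move=> x; rewrite mem_filter mem_primes_between => /andP[_ /and3P[]] _ -> ->.
- move=> e; rewrite mem_filter mem_primes_between => /andP[e_P e_s].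
  move: (e_s) e_P; rewrite mem_primes => /and3P[-> _ _]; by rewrite m_r //= -leqNgt.
- exact: (sorted_filter ltn_trans _ (sorted_primes m)).
by move=> e; rewrite mem_filter mem_primes => /andP[_ /and3P[]].
Qed.

End Witness.

Theorem theorem2p1 (r l k d : nat) :
  0 < r ->
  b r + 2 <= k ->
  inB r d ->
  d < pth (k + 1) - r ->
  d * (pth (k + l) - r) < (d + 1) * (pth k - r) ->
  inF r (d * pth (k + l) * \prod_(b r + 1 <= i < k) pth i).
Proof.
move=> _ k_large d_inB; rewrite addn1 => d_lt dp_lt.
rewrite prod_primes_between; split; first exact: inB_n.
by move=> m; apply: Schemmel_n_lt.
Qed.
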